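(* Let $n\ge 2$ and let $A\in\mathbb{R}^{n\times n}$ be the tridiagonal Toeplitz matrix with all diagonal entries equal to $b\ge 0$, all subdiagonal entries ($A_{i+1,i}$) equal to $a\ge 0$, all superdiagonal entries ($A_{i,i+1}$) equal to $c\ge0$, and all other entries zero, where $\max(a,c)>0$. Let $r(t):=r\big((1-t)A+tA^{\top}\big)$. Then on $t\in(0,1)$, $r(t)$ is concave in $t$, nondecreasing on $(0,1/2)$ and nonincreasing on $(1/2,1)$; moreover, when $a\neq c$, $r$ is strictly concave on $(0,1)$, strictly increasing on $(0,1/2)$, and strictly decreasing on $(1/2,1)$.
   Context: $r(M)$ denotes the spectral radius of a square matrix $M$. *)

From HB Require Import structures.
From mathcomp Require Import all_boot all_order all_algebra.
From mathcomp Require Import complex.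
From mathcomp Require Import classical_sets reals.
Set Implicit Arguments. Unset Strict Implicit. Unset Printing Implicit Defensive.
Import Order.TTheory GRing.Theory Num.Theory.
Local Open Scope ring_scope.
Local Open Scope classical_set_scope.

(* Spectral radius r(M) of a real square matrix: the supremum (= maximum,
   the set being finite) of the moduli |z| (Re of the norm of R[i], which is real) of the complex eigenvalues z of M,
   i.e. of the complex roots of the characteristic polynomial of M. *)
Definition spectral_radius (R : realType) (n : nat) (M : 'M[R]_n) : R :=
  sup [set @complex.Re R `|z| | z in
        [set z : R[i] | root (char_poly (map_mx (real_complex R) M)) z]].

Definition tridiag_toeplitz (R : realType) (n : nat) (a b c : R) : 'M[R]_n :=
  \matrix_(i < n, j < n)
    (if i == j :> nat then b
     else if i == j.+1 :> nat then a
     else if i.+1 == j :> nat then c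
     else 0).

Definition rfun (R : realType) (n : nat) (A : 'M[R]_n) (t : R) : R :=
  spectral_radius ((1 - t) *: A + t *: A^T).

Definition concave_on (R : realType) (D : set R) (f : R -> R) : Prop :=
  forall s t l, D s -> D t -> 0 <= l <= 1 ->
    (1 - l) * f s + l * f t <= f ((1 - l) * s + l * t).

Definition strictly_concave_on (R : realType) (D : set R) (f : R -> R) : Prop :=
  forall s t l, D s -> D t -> s != t -> 0 < l < 1 ->
    (1 - l) * f s + l * f t < f ((1 - l) * s + l * t).

Definition nondecreasing_on (R : realType) (D : set R) (f : R -> R) : Prop :=
  forall s t, D s -> D t -> s <= t -> f s <= f t.
Definition nonincreasing_on (R : realType) (D : set R) (f : R -> R) : Prop :=
  forall s t, D s -> D t -> s <= t -> f t <= f s.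
Definition strictly_increasing_on (R : realType) (D : set R) (f : R -> R) : Prop :=
  forall s t, D s -> D t -> s < t -> f s < f t.
Definition strictly_decreasing_on (R : realType) (D : set R) (f : R -> R) : Prop :=
  forall s t, D s -> D t -> s < t -> f t < f s.

Definition oint (R : realType) (x y : R) : set R := [set t | x < t < y].

From HB Require Import structures.
From mathcomp Require Import all_boot all_order all_algebra.
From mathcomp Require Import complex.
From mathcomp Require Import classical_sets reals trigo.
From mathcomp Require Import zify ring lra.
Set Implicit Arguments. Unset Strict Implicit. Unset Printing Implicit Defensive.
Import Order.TTheory GRing.Theory Num.Theory.
Local Open Scope ring_scope.

(* The matrix (1 - t) A + t A^T is tridiagonal Toeplitz with diagonal b and
   off-diagonal entries x = (1 - t) a + t c and y = (1 - t) c + t a.  When x, y > 0,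
   conjugation by diag(e^i) rescales it to b + sqrt(x y) J with J = tridiag(1, 0, 1).
   J is real symmetric, so its spectrum is real, and it is symmetric about 0, so
   r(t) = b + r(J) sqrt(x y).  Here r(J) >= 2 cos(pi / (n + 1)) > 0 for n >= 2, an
   eigenvalue with eigenvector (sin (k pi / (n + 1)))_k.  Finally
   x y = a c + (a - c)^2 t (1 - t): the square root of a concave parabola symmetric
   about 1/2, nonconstant exactly when a <> c. *)

Definition tridiag (F : pzRingType) (n : nat) (a b c : F) : 'M[F]_n :=
  \matrix_(i < n, j < n)
    (if i == j :> nat then b
     else if i == j.+1 :> nat then a
     else if i.+1 == j :> nat then c
     else 0).

Lemma tridiag_toeplitzE (R : realType) n (a b c : R) :
  tridiag_toeplitz n a b c = tridiag n a b c.
Proof. by []. Qed.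

Section TridiagAlgebra.
Variables (F : pzRingType) (n : nat).

Lemma tridiag_trmx (a b c : F) : (tridiag n a b c)^T = tridiag n c b a.
Proof. by apply/matrixP => i j; rewrite !mxE; do !case: ifP => /eqP ?; try lia. Qed.

Lemma tridiagD (a b c a' b' c' : F) :
  tridiag n a b c + tridiag n a' b' c' = tridiag n (a + a') (b + b') (c + c').
Proof. by apply/matrixP => i j; rewrite !mxE; do !case: ifP => _; rewrite ?addr0. Qed.

Lemma tridiagZ (x a b c : F) :
  x *: tridiag n a b c = tridiag n (x * a) (x * b) (x * c).
Proof. by apply/matrixP => i j; rewrite !mxE; do !case: ifP => _; rewrite ?mulr0. Qed.

Lemma tridiag_scalar (a b c : F) : tridiag n a b c = b%:M + tridiag n a 0 c.
Proof.
apply/matrixP => i j; rewrite !mxE -val_eqE.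
by case: ifP => _; rewrite ?mulr1n ?mulr0n ?add0r ?addr0.
Qed.

End TridiagAlgebra.

Lemma map_tridiag (F G : pzRingType) (f : {rmorphism F -> G}) n (a b c : F) :
  map_mx f (tridiag n a b c) = tridiag n (f a) (f b) (f c).
Proof. by apply/matrixP => i j; rewrite !mxE; do !case: ifP => _; rewrite ?rmorph0. Qed.

Section TridiagEigenvalues.
Variables (F : fieldType) (n : nat).
Implicit Types (a b c e s w : F) (M P Q : 'M[F]_n).

Lemma eigenvalue_conj M P Q w : Q *m P = 1%:M ->
  eigenvalue M w -> eigenvalue (P *m M *m Q) w.
Proof.
move=> QP /eigenvalueP [v vM v0]; apply/eigenvalueP; exists (v *m Q).
  by rewrite !mulmxA -(mulmxA v) QP mulmx1 vM scalemxAl.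
apply: contra v0 => /eqP vQ0.
by rewrite -[v]mulmx1 -QP mulmxA vQ0 mul0mx.
Qed.

Lemma eigenvalue_affine M y s w : s != 0 ->
  eigenvalue (y%:M + s *: M) w = eigenvalue M ((w - y) / s).
Proof.
move=> s0; have mulE v : v *m (y%:M + s *: M) = y *: v + s *: (v *m M).
  by rewrite mulmxDr mul_mx_scalar scalemxAr.
apply/eigenvalueP/eigenvalueP => -[v vM v0]; exists v => //.
  apply: (scalerI s0); move: vM; rewrite mulE => /(canRL (addKr _)).
  by rewrite scalerA mulrC divfK // scalerBl addrC.
by rewrite mulE vM scalerA mulrC divfK // scalerBl addrC subrK.
Qed.

Lemma eigenvalue_tridiag_diag_conj a b c e w : e != 0 ->
  eigenvalue (tridiag n (e * a) b (e^-1 * c)) w = eigenvalue (tridiag n a b c) w.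
Proof.
suff conj e' a' c' : e' != 0 -> eigenvalue (tridiag n a' b c') w ->
    eigenvalue (tridiag n (e' * a') b (e'^-1 * c')) w.
  move=> e0; apply/idP/idP; last exact: conj.
  by move/(conj e^-1); rewrite invr_eq0 invrK !mulrA mulVf // mulfV // !mul1r; apply.
move=> e0; pose D (k : F) := diag_mx (\row_(i < n) k ^+ i).
have -> : tridiag n (e' * a') b (e'^-1 * c') = D e' *m tridiag n a' b c' *m D e'^-1.
  apply/matrixP => i j; rewrite mul_diag_mx mul_mx_diag !mxE exprVn.
  case: ifP => [/eqP ->|_]; first by field; rewrite ?expf_neq0.
  case: ifP => [/eqP ->|_]; first by rewrite exprS; field; rewrite ?expf_neq0.
  case: ifP => [/eqP <-|_]; last by rewrite mulr0 mul0r.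
  by rewrite exprS; field; rewrite ?expf_neq0.
apply: eigenvalue_conj; apply/matrixP => i j.
rewrite mul_diag_mx !mxE; case: eqP => [->|]; last by rewrite !mulr0.
by rewrite mulr1n -exprMn mulVf // expr1n.
Qed.

Lemma eigenvalue_tridiag a b c s w : a != 0 -> s != 0 -> s * s = a * c ->
  eigenvalue (tridiag n a b c) w = eigenvalue (tridiag n 1 0 1) ((w - b) / s).
Proof.
move=> a0 s0 ss; have e0 : a / s != 0 by rewrite mulf_neq0 ?invr_eq0.
have -> : tridiag n a b c = tridiag n (a / s * s) b ((a / s)^-1 * s).
  by rewrite divfK // invf_div mulrAC ss [a * c]mulrC mulfK.
have sJ : tridiag n s 0 s = s *: tridiag n 1 0 1 by rewrite tridiagZ mulr1 mulr0.
by rewrite eigenvalue_tridiag_diag_conj // tridiag_scalar sJ eigenvalue_affine.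
Qed.

Lemma eigenvalue_tridiag101N w :
  eigenvalue (tridiag n 1 0 1) (- w) = eigenvalue (tridiag n 1 0 1) w.
Proof.
(* Both 1 and -1 are square roots of (-1) * (-1). *)
have m10 : (-1 : F) != 0 by rewrite oppr_eq0 oner_eq0.
have := eigenvalue_tridiag 0 w m10 m10 erefl.
rewrite (eigenvalue_tridiag 0 w m10 (oner_neq0 F) (esym (mulrNN 1 1))).
by rewrite subr0 divr1 invrN1 mulrN1 => ->.
Qed.

End TridiagEigenvalues.

Lemma seq_has_max (R : realDomainType) (s : seq R) : s != [::] ->
  exists2 m, m \in s & forall x, x \in s -> x <= m.
Proof.
elim: s => // x [|y s] IH _.
  by exists x => [|z]; rewrite mem_seq1 // => /eqP ->.
have [m ms ubm] := IH isT; have [xm|mx] := lerP x m.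
  by exists m => [|z]; rewrite in_cons ?ms ?orbT // => /predU1P [->|/ubm].
exists x => [|z]; rewrite ?mem_head // in_cons => /predU1P [->//|/ubm zm].
exact: le_trans zm (ltW mx).
Qed.

Section RealSymmetricSpectrum.
Variables (R : rcfType) (n : nat).
Local Open Scope complex_scope.

Lemma eigenvalue_real_symmetric (M : 'M[R]_n) (mu : R[i]) : M^T = M ->
  eigenvalue (map_mx (real_complex R) M) mu -> mu = (complex.Re mu)%:C.
Proof.
(* For w the conjugate of v, both mu and mu^* are the quotient of v MC w^T by
   v w^T = \sum_k |v_k|^2 > 0. *)
set MC := map_mx _ M => MT /eigenvalueP [v vM v0].
set w := map_mx conjc v.
have MCT : MC^T = MC by rewrite /MC map_trmx MT.
have wM : w *m MC = mu^* *: w.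
  have MCc : map_mx conjc MC = MC by apply/matrixP => i j; rewrite !mxE conjc_real.
  by rewrite -MCc -map_mxM vM; apply/matrixP => i j; rewrite !mxE rmorphM.
have vMw1 : v *m MC *m w^T = mu *: (v *m w^T) by rewrite vM scalemxAl.
have vMw2 : v *m MC *m w^T = mu^* *: (v *m w^T).
  by rewrite -mulmxA -MCT -trmx_mul wM linearZ /= scalemxAr.
have vw0 : (v *m w^T) 0 0 != 0.
  rewrite !mxE; apply: contra v0 => /eqP vw0; apply/eqP/matrixP => i j.
  have vv : \sum_k v 0 k * (v 0 k)^* = 0.
    by rewrite -[RHS]vw0; apply: eq_bigr => k _; rewrite !mxE.
  have /(_ j isT)/eqP := psumr_eq0P (fun k _ => mulcJ_ge0 (v 0 k)) vv.
  rewrite mulf_eq0 conjc_eq0 orbb => /eqP.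
  by rewrite (ord1 i) mxE.
have muJ : mu = mu^*.
  have := congr1 (fun A : 'M_1 => A 0 0) (etrans (esym vMw1) vMw2).
  by rewrite /= [LHS]mxE [RHS]mxE => /(mulIf vw0).
by rewrite ReJ_add -muJ; field.
Qed.

Lemma eigenvalue_tridiag101_real (mu : R[i]) :
  eigenvalue (tridiag n 1 0 1) mu -> mu = (complex.Re mu)%:C.
Proof.
have -> : tridiag n 1 0 1 = map_mx (real_complex R) (tridiag n 1 0 1).
  by rewrite map_tridiag rmorph0 rmorph1.
by apply: eigenvalue_real_symmetric; rewrite tridiag_trmx.
Qed.

Lemma tridiag101_max_eigenvalue : (0 < n)%N -> exists K : R,
  eigenvalue (tridiag n 1 0 1) K%:C /\
  forall mu, eigenvalue (tridiag n 1 0 1) mu -> `|complex.Re mu| <= K.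
Proof.
move=> n_gt0; set J := tridiag n 1 0 1 : 'M[R[i]]_n.
have [rs Jrs] := closed_field_poly_normal (char_poly J).
rewrite (monicP (char_poly_monic J)) scale1r in Jrs.
have JrsE mu : eigenvalue J mu = (mu \in rs).
  by rewrite eigenvalue_root_char Jrs root_prod_XsubC.
have [|_ /mapP [z zrs ->] ubK] := @seq_has_max R [seq complex.Re z | z <- rs].
  by have [mu] := eigenvalue_closed J n_gt0; rewrite JrsE; case: (rs).
exists (complex.Re z); split; first by rewrite -eigenvalue_tridiag101_real JrsE.
move=> mu Jmu; rewrite ler_norml; apply/andP; split.
  rewrite lerNl (_ : - complex.Re mu = complex.Re (- mu)); last by case: (mu).
  apply/ubK/map_f.
  by rewrite -JrsE eigenvalue_tridiag101N.
by apply/ubK/map_f; rewrite -JrsE.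
Qed.

End RealSymmetricSpectrum.

Lemma mul_row_tridiag101 (F : pzRingType) n (f : nat -> F) :
  f 0 = 0 -> f n.+1 = 0 ->
  \row_(j < n) f j.+1 *m tridiag n 1 0 1 = \row_(j < n) (f j + f j.+2).
Proof.
move=> f0 fn; apply/matrixP => i j; rewrite ord1 !mxE.
under eq_bigr => k _ do rewrite !mxE.
transitivity (\sum_(k < n | k == j.+1 :> nat) f k.+1 +
              \sum_(k < n | k.+1 == j :> nat) f k.+1).
  rewrite [in RHS]big_mkcond [X in _ + X]big_mkcond -big_split /=.
  apply: eq_bigr => k _.
  by do !case: ifP => /eqP ?; rewrite ?mulr0 ?mulr1 ?addr0 ?add0r; try lia.
rewrite (big_ord1_eq _ (fun m => f m.+1)) addrC; congr (_ + _).
  case: j => [[|j] lt_jn] /=; first by rewrite big_pred0.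
  by under eq_bigl do rewrite eqSS; rewrite (big_ord1_eq _ (fun m => f m.+1)) ltnW.
case: ltnP => // le_nj; rewrite (_ : j.+2 = n.+1) ?fn //.
by have := ltn_ord j; lia.
Qed.

Lemma eigenvalue_tridiag101_cos (R : realType) n : (0 < n)%N ->
  eigenvalue (tridiag n 1 0 1 : 'M[R]_n) (2 * cos (pi / n.+1%:R)).
Proof.
move=> n_gt0; set th := pi / n.+1%:R; pose f k := sin (k%:R * th).
have thE : n.+1%:R * th = pi by rewrite mulrC divfK ?pnatr_eq0.
apply/eigenvalueP; exists (\row_(j < n) f j.+1).
  rewrite mul_row_tridiag101 /f ?mul0r ?sin0 ?thE ?sinpi //.
  apply/matrixP => i j; rewrite !mxE.
  have -> : j.+2%:R * th = j.+1%:R * th + th by rewrite mulrSr mulrDl mul1r.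
  have -> : j%:R * th = j.+1%:R * th - th by rewrite mulrSr mulrDl mul1r addrK.
  by rewrite sinB sinD; ring.
apply/negP => /eqP/matrixP /(_ 0 (Ordinal n_gt0)); rewrite !mxE /f mul1r.
apply/eqP; rewrite gt_eqF // sin_gt0_pi // /th divr_gt0 ?pi_gt0 ?ltr0n //=.
by rewrite ltr_pdivrMr ?ltr0n // ltr_pMr ?pi_gt0 // ltr1n.
Qed.

Lemma sup_eq_max (R : realType) (X : set R) (m : R) :
  X m -> ubound X m -> sup X = m.
Proof.
move=> Xm ubm; apply/le_anti; rewrite ge_sup /=; [|by exists m|by []].
by apply: sup_upper_bound => //; split; exists m.
Qed.

Lemma normc_real (R : rcfType) (x : R) : complex.Re `|x%:C%C| = `|x|.
Proof. by rewrite normc_def /= expr0n /= addr0 sqrtr_sqr. Qed.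

Section TridiagSpectralRadius.
Variables (R : realType) (n : nat).
Local Notation J := (tridiag n 1 0 1).
Local Open Scope complex_scope.

Lemma spectral_radius_tridiag_max (K a b c : R) :
  eigenvalue J K%:C ->
  (forall mu, eigenvalue J mu -> `|complex.Re mu| <= K) ->
  0 <= b -> 0 < a -> 0 < c ->
  spectral_radius (tridiag n a b c) = b + K * Num.sqrt (a * c).
Proof.
move=> JK ubK b_ge0 a_gt0 c_gt0.
have K_ge0 : 0 <= K by apply: le_trans (ubK _ JK); rewrite normr_ge0.
set s := Num.sqrt (a * c).
have s_gt0 : 0 < s by rewrite sqrtr_gt0 mulr_gt0.
have sC0 : s%:C != 0 :> R[i] by rewrite fmorph_eq0 gt_eqF.
have eigE (z : R[i]) :
    root (char_poly (map_mx (real_complex R) (tridiag n a b c))) z =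
    eigenvalue J ((z - b%:C) / s%:C).
  rewrite -eigenvalue_root_char map_tridiag [LHS](eigenvalue_tridiag _ _ _ _ sC0) //.
    by rewrite fmorph_eq0 gt_eqF.
  by rewrite -!rmorphM -expr2 sqr_sqrtr // mulr_ge0 // ltW.
apply: sup_eq_max.
  exists (b + K * s)%:C.
    by rewrite /= eigE -rmorphB -fmorphV -rmorphM addrC addKr mulfK ?gt_eqF //; apply: JK.
  by rewrite normc_real ger0_norm // addr_ge0 // mulr_ge0 // ltW.
move=> _ [z Sz <-]; have Jz : eigenvalue J ((z - b%:C) / s%:C) by rewrite -eigE.
have zE : z = (b + s * complex.Re ((z - b%:C) / s%:C))%:C.
  transitivity (b%:C + s%:C * ((z - b%:C) / s%:C)).
    by rewrite mulrC divfK // addrC subrK.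
  by rewrite {1}(eigenvalue_tridiag101_real Jz) -rmorphM -rmorphD.
rewrite zE normc_real (le_trans (ler_normD _ _)) // ger0_norm // lerD2l.
by rewrite normrM gtr0_norm // mulrC ler_pM2r // ubK.
Qed.

Lemma spectral_radius_tridiag (a b c : R) : (0 < n)%N ->
  0 <= b -> 0 < a -> 0 < c ->
  spectral_radius (tridiag n a b c) = b + spectral_radius J * Num.sqrt (a * c).
Proof.
move=> n_gt0 b_ge0 a_gt0 c_gt0.
have [K [JK ubK]] := tridiag101_max_eigenvalue R n_gt0.
rewrite !(spectral_radius_tridiag_max JK ubK) ?ltr01 //.
by rewrite add0r mulr1 sqrtr1 mulr1.
Qed.

Lemma spectral_radius_tridiag101_gt0 : (1 < n)%N -> 0 < spectral_radius (J : 'M[R]_n).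
Proof.
move=> n_gt1; have n_gt0 : (0 < n)%N by apply: ltnW.
have [K [JK ubK]] := tridiag101_max_eigenvalue R n_gt0.
rewrite (spectral_radius_tridiag_max JK ubK) ?ltr01 // add0r mulr1 sqrtr1 mulr1.
have th_gt0 : 0 < pi / n.+1%:R :> R by rewrite divr_gt0 ?pi_gt0 ?ltr0n.
have cos_gt0 : 0 < cos (pi / n.+1%:R) :> R.
  apply: cos_gt0_pihalf; rewrite (lt_trans _ th_gt0) ?oppr_lt0 ?divr_gt0 ?pi_gt0 //=.
  by rewrite ltr_pM2l ?pi_gt0 // ltf_pV2 ?posrE ?ltr0n // ltr_nat ltnS.
have := eigenvalue_tridiag101_cos R n_gt0.
rewrite -(eigenvalue_map (real_complex R)) map_tridiag rmorph0 rmorph1 => /ubK /=.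
by apply: lt_le_trans; rewrite normrM !gtr0_norm ?mulr_gt0 ?ltr0n.
Qed.

End TridiagSpectralRadius.

Lemma sqrtr_concave (R : rcfType) (x y l : R) : 0 <= x -> 0 <= y -> 0 <= l <= 1 ->
  (1 - l) * Num.sqrt x + l * Num.sqrt y <= Num.sqrt ((1 - l) * x + l * y).
Proof.
move=> x_ge0 y_ge0 /andP [l_ge0 l_le1].
have sx := sqrtr_ge0 x; have sy := sqrtr_ge0 y.
rewrite -[X in X <= _]ger0_norm ?addr_ge0 ?mulr_ge0 ?subr_ge0 //.
rewrite -sqrtr_sqr ler_sqrt ?addr_ge0 ?mulr_ge0 ?subr_ge0 //.
rewrite -{2}(sqr_sqrtr x_ge0) -{2}(sqr_sqrtr y_ge0) -subr_ge0.
have -> : (1 - l) * Num.sqrt x ^+ 2 + l * Num.sqrt y ^+ 2 -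
    ((1 - l) * Num.sqrt x + l * Num.sqrt y) ^+ 2 =
    l * (1 - l) * (Num.sqrt x - Num.sqrt y) ^+ 2 by ring.
by rewrite mulr_ge0 ?sqr_ge0 ?mulr_ge0 ?subr_ge0.
Qed.

Lemma convex_comb_oint (R : realFieldType) (x y s t l : R) :
  x < s < y -> x < t < y -> 0 <= l <= 1 -> x < (1 - l) * s + l * t < y.
Proof.
move=> /andP [xs sy] /andP [xt ty] /andP [l0 l1].
by case: (lerP s t) => st; apply/andP; split; nra.
Qed.

Lemma convex_comb_gt0 (R : realDomainType) (a c t : R) :
  0 <= a -> 0 <= c -> 0 < Num.max a c -> 0 < t < 1 -> 0 < (1 - t) * a + t * c.
Proof. by move=> ? ?; rewrite lt_max => /orP [?|?] /andP [? ?]; nra. Qed.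

Section SqrtParabolaProfile.
Variables (R : realType) (beta kappa u v : R) (f : R -> R).
Hypotheses (kappa_gt0 : 0 < kappa) (u_ge0 : 0 <= u) (v_ge0 : 0 <= v).
Let p t := u + v * (t * (1 - t)).
Hypothesis fE : forall t, 0 < t < 1 -> f t = beta + kappa * Num.sqrt (p t).

Let p_ge0 t : 0 < t < 1 -> 0 <= p t.
Proof.
case/andP => t0 t1; apply: addr_ge0 => //; apply: mulr_ge0 => //.
by rewrite mulr_ge0 ?subr_ge0 ?ltW.
Qed.

Let p_convex_gap s t l :
  p ((1 - l) * s + l * t) - ((1 - l) * p s + l * p t) =
  v * (l * (1 - l) * (s - t) ^+ 2).
Proof. by rewrite /p; ring. Qed.

Let p_sub s t : p t - p s = v * ((t - s) * (1 - s - t)).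
Proof. by rewrite /p; ring. Qed.

Let f_le s t : 0 < s < 1 -> 0 < t < 1 -> p s <= p t -> f s <= f t.
Proof. by move=> s01 t01 pst; rewrite !fE // lerD2l ler_pM2l // ler_sqrt // p_ge0. Qed.

Let f_lt s t : 0 < s < 1 -> 0 < t < 1 -> p s < p t -> f s < f t.
Proof.
move=> s01 t01 pst; rewrite !fE // ltrD2l ltr_pM2l // ltr_sqrt //.
exact: le_lt_trans (p_ge0 s01) pst.
Qed.

Let f_convex_comb s t l : 0 < s < 1 -> 0 < t < 1 -> 0 <= l <= 1 ->
  (1 - l) * f s + l * f t <= beta + kappa * Num.sqrt ((1 - l) * p s + l * p t).
Proof.
move=> s01 t01 l01; rewrite !fE //.
have -> : (1 - l) * (beta + kappa * Num.sqrt (p s)) +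
    l * (beta + kappa * Num.sqrt (p t)) =
    beta + kappa * ((1 - l) * Num.sqrt (p s) + l * Num.sqrt (p t)) by ring.
by rewrite lerD2l ler_pM2l // sqrtr_concave ?p_ge0.
Qed.

Lemma sqrt_parabola_concave : concave_on (oint 0 1) f.
Proof.
move=> s t l s01 t01 l01; have m01 := convex_comb_oint s01 t01 l01.
apply: (le_trans (f_convex_comb s01 t01 l01)); rewrite fE // lerD2l ler_pM2l //.
rewrite ler_sqrt ?p_ge0 // -subr_ge0 p_convex_gap.
by case/andP: l01 => l0 l1; rewrite mulr_ge0 // mulr_ge0 ?sqr_ge0 // mulr_ge0 ?subr_ge0.
Qed.

Let oint_left (t : R) : 0 < t < 1/2 -> 0 < t < 1.
Proof. by case/andP => t0 t1; apply/andP; split; lra. Qed.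

Let oint_right (t : R) : 1/2 < t < 1 -> 0 < t < 1.
Proof. by case/andP => t0 t1; apply/andP; split; lra. Qed.

Lemma sqrt_parabola_nondecreasing : nondecreasing_on (oint 0 (1/2)) f.
Proof.
move=> s t s01 t01 st; apply: f_le (oint_left s01) (oint_left t01) _.
case/andP: s01 t01 => s0 s1 /andP [t0 t1].
by rewrite -subr_ge0 p_sub; apply: mulr_ge0 => //; apply: mulr_ge0; lra.
Qed.

Lemma sqrt_parabola_nonincreasing : nonincreasing_on (oint (1/2) 1) f.
Proof.
move=> s t s01 t01 st; apply: f_le (oint_right t01) (oint_right s01) _.
case/andP: s01 t01 => s0 s1 /andP [t0 t1].
rewrite -subr_ge0 p_sub -[_ * (1 - _ - _)]mulrNN.
by apply: mulr_ge0 => //; apply: mulr_ge0; lra.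
Qed.

Hypothesis v_gt0 : 0 < v.

Let p_gt0 (t : R) : 0 < t < 1 -> 0 < p t.
Proof.
case/andP => t0 t1; apply: ltr_pwDr => //; apply: mulr_gt0 => //.
by rewrite mulr_gt0 // subr_gt0.
Qed.

Lemma sqrt_parabola_strictly_concave : strictly_concave_on (oint 0 1) f.
Proof.
move=> s t l s01 t01 st /andP [l0 l1].
have l01 : 0 <= l <= 1 by rewrite !ltW.
have m01 := convex_comb_oint s01 t01 l01.
apply: (le_lt_trans (f_convex_comb s01 t01 l01)); rewrite fE // ltrD2l ltr_pM2l //.
rewrite ltr_sqrt ?p_gt0 // -subr_gt0 p_convex_gap; apply: mulr_gt0 => //.
apply: mulr_gt0; first by rewrite mulr_gt0 // subr_gt0.
by rewrite exprn_even_gt0 // subr_eq0.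
Qed.

Lemma sqrt_parabola_strictly_increasing : strictly_increasing_on (oint 0 (1/2)) f.
Proof.
move=> s t s01 t01 st; apply: f_lt (oint_left s01) (oint_left t01) _.
case/andP: s01 t01 => s0 s1 /andP [t0 t1].
by rewrite -subr_gt0 p_sub; apply: mulr_gt0 => //; apply: mulr_gt0; lra.
Qed.

Lemma sqrt_parabola_strictly_decreasing : strictly_decreasing_on (oint (1/2) 1) f.
Proof.
move=> s t s01 t01 st; apply: f_lt (oint_right t01) (oint_right s01) _.
case/andP: s01 t01 => s0 s1 /andP [t0 t1].
rewrite -subr_gt0 p_sub -[_ * (1 - _ - _)]mulrNN.
by apply: mulr_gt0 => //; apply: mulr_gt0; lra.
Qed.

End SqrtParabolaProfile.

Lemma rfun_tridiag_toeplitz (R : realType) n (a b c t : R) :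
  (0 < n)%N -> 0 <= a -> 0 <= b -> 0 <= c -> 0 < Num.max a c -> 0 < t < 1 ->
  rfun (tridiag_toeplitz n a b c) t =
  b + spectral_radius (tridiag n 1 0 1) *
      Num.sqrt (a * c + (a - c) ^+ 2 * (t * (1 - t))).
Proof.
move=> n_gt0 a_ge0 b_ge0 c_ge0 ac_gt0 t01.
rewrite /rfun tridiag_toeplitzE tridiag_trmx !tridiagZ tridiagD.
rewrite (_ : (1 - t) * b + t * b = b); last by ring.
rewrite [LHS]spectral_radius_tridiag ?convex_comb_gt0 // 1?maxC //.
by congr (_ + _ * Num.sqrt _); ring.
Qed.

Unset Implicit Arguments.

Theorem theorem2 (R : realType) (n : nat) (a b c : R) :
  (2 <= n)%N -> 0 <= a -> 0 <= b -> 0 <= c -> 0 < Num.max a c ->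
  let r := rfun (tridiag_toeplitz n a b c) in
  [/\ concave_on (oint 0 1) r,
      nondecreasing_on (oint 0 (1/2)) r,
      nonincreasing_on (oint (1/2) 1) r &
      (a != c ->
       [/\ strictly_concave_on (oint 0 1) r,
           strictly_increasing_on (oint 0 (1/2)) r &
           strictly_decreasing_on (oint (1/2) 1) r])].
Proof.
move=> n_ge2 a_ge0 b_ge0 c_ge0 ac_gt0 r.
have rho_gt0 := spectral_radius_tridiag101_gt0 R n_ge2.
have rE := rfun_tridiag_toeplitz (ltnW n_ge2) a_ge0 b_ge0 c_ge0 ac_gt0.
have ac_ge0 : 0 <= a * c by rewrite mulr_ge0.
have d_ge0 : 0 <= (a - c) ^+ 2 by rewrite sqr_ge0.
split.
- exact: sqrt_parabola_concave rho_gt0 ac_ge0 d_ge0 rE.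
- exact: sqrt_parabola_nondecreasing rho_gt0 ac_ge0 d_ge0 rE.
- exact: sqrt_parabola_nonincreasing rho_gt0 ac_ge0 d_ge0 rE.
move=> a_neq_c; have d_gt0 : 0 < (a - c) ^+ 2.
  by rewrite lt_def sqr_ge0 sqrf_eq0 subr_eq0 a_neq_c.
split.
- exact: sqrt_parabola_strictly_concave rho_gt0 ac_ge0 d_ge0 rE d_gt0.
- exact: sqrt_parabola_strictly_increasing rho_gt0 ac_ge0 d_ge0 rE d_gt0.
- exact: sqrt_parabola_strictly_decreasing rho_gt0 ac_ge0 d_ge0 rE d_gt0.
Qed.
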